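(* Let $n\ge 2$. The number of distinct diagonals $(F_{0,0},F_{1,1},\dots,F_{2n-3,2n-3})$ occurring among the $\mathbf{F}$-matrices of fully heterochronous ranked tree shapes with $n$ leaves equals the Catalan number $C_{n-1}=\frac1n\binom{2n-2}{n-1}$.
   Context: A fully heterochronous ranked tree shape with $n$ leaves is a rooted full binary tree (every node has out-degree $0$ or $2$), without leaf labels, with $n$ leaves, together with a total ordering of all $2n-1$ nodes (leaves included) such that nodes appear in increasing order along every path from the root to a leaf; the position of a node in this order, numbered $0,\dots,2n-2$, is its rank. Its $\mathbf{F}$-matrix is the $(2n-2)\times(2n-2)$ lower triangular matrix $F$, indices from $0$ to $2n-3$, where for $0\le j\le i$ the entry $F_{i,j}$ is the number of edges from a parent node $v$ to a child node $w$ with rank of $v$ at most $j$ and rank of $w$ larger than $i$. *)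

From mathcomp Require Import all_boot.
Set Implicit Arguments. Unset Strict Implicit. Unset Printing Implicit Defensive.

(* A fully heterochronous ranked tree shape with n leaves is encoded by
   identifying each of its 2n-1 nodes with its rank (an element of
   'I_(2n-1)).  The tree is given by its parent map [p]: the parent of the
   node of rank w (w > 0) is the node of rank [p w]; the value [p 0] (root)
   is irrelevant.  Since ranks increase along root-to-leaf paths, the root
   has rank 0 and every non-root node has a parent of smaller rank. *)

Notation node n := 'I_(n.*2.-1).

Definition nchildren n (p : {ffun node n -> node n}) (v : node n) : nat :=
  #|[set w : node n | (0 < w) && (p w == v)]|.

Definition ranked_tree n (p : {ffun node n -> node n}) : bool :=
  [&& [forall w : node n, (0 < w) ==> (p w < w)],
      [forall v : node n, (nchildren p v == 0) || (nchildren p v == 2)]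
    & #|[set v : node n | nchildren p v == 0]| == n].

Definition Fentry n (p : {ffun node n -> node n}) (i j : nat) : nat :=
  #|[set w : node n | [&& 0 < w, p w <= j & i < w]]|.

Definition Fdiag n (p : {ffun node n -> node n}) : seq nat :=
  [seq Fentry p i i | i <- iota 0 (n.*2 - 2)].

Definition diagonals n : seq (seq nat) :=
  undup [seq Fdiag p | p <- enum {ffun node n -> node n} & ranked_tree p].

Definition catalan (m : nat) : nat := 'C(m.*2, m) %/ m.+1.

From mathcomp Require Import all_boot zify.
Set Implicit Arguments. Unset Strict Implicit.

(* F_{i,i} counts the edges alive between ranks i and i+1.  Going down the
   ranks it starts at 2, moves by +1 at an internal node and by -1 at a leaf,
   stays positive and ends at 1: a diagonal is a Dyck path of semilength n-1,
   shifted up by one.  Conversely every such path is the diagonal of the tree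
   in which each new node hangs from the most recently opened free edge.  Dyck
   paths are counted by the ballot numbers C(k, d) - C(k, d+1). *)

Definition updown (a b : nat) : bool := (b == a.+1) || (b.+1 == a).

Fixpoint dyck_walk (h : nat) (s : seq nat) : bool :=
  if s is x :: s' then [&& 0 < x, updown h x & dyck_walk x s'] else h == 1.

Fixpoint dyck_walks (k h : nat) : seq (seq nat) :=
  if k is k'.+1 then
    map (cons h.+1) (dyck_walks k' h.+1) ++
    (if 1 < h then map (cons h.-1) (dyck_walks k' h.-1) else [::])
  else if h == 1 then [:: [::]] else [::].

Lemma mem_dyck_walks k h s :
  (s \in dyck_walks k h) = (size s == k) && dyck_walk h s.
Proof.
elim: k h s => [|k IH] h [|x s] /=; first by case: (h == 1).
- by case: (h == 1).
- rewrite mem_cat; apply/negbTE/norP; split; first by apply/mapP => -[].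
  by case: ifP => // _; apply/mapP => -[].
have mem_cons a y L : (y :: s \in map (cons a) L) = (y == a) && (s \in L).
  by apply/mapP/andP => [[t tL [-> ->]] | [/eqP-> sL]]; last exists s.
rewrite mem_cat eqSS mem_cons IH /updown.
case: ifP => h1; rewrite ?mem_cons ?in_nil ?IH ?orbF.
  have [->|_] := eqVneq x h.+1.
    by rewrite (_ : h.+1 == h.-1 = false) /= ?orbF //; apply/eqP; lia.
  have [->|x_ne] := eqVneq x h.-1.
    have h_pos : 0 < h.-1 by rewrite -ltnS prednK // ltnW.
    by rewrite /= h_pos prednK ?eqxx // ltnW.
  rewrite /= (_ : x.+1 == h = false) ?andbF //.
  by apply/eqP; move/eqP: x_ne; lia.
have [->|_] := eqVneq x h.+1; first by [].
case: x => [|x] /=; first by rewrite andbF.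
by rewrite (_ : x.+2 == h = false) ?andbF //; apply/eqP; lia.
Qed.

Lemma uniq_dyck_walks k h : uniq (dyck_walks k h).
Proof.
elim: k h => [|k IH] h /=; first by case: (h == 1).
have cons_inj a : injective (@cons nat a) by move=> ? ? [].
rewrite cat_uniq map_inj_uniq ?IH //=; case: ifP => _ //=.
rewrite map_inj_uniq ?IH ?andbT //.
by apply/hasPn => _ /mapP[t _ ->]; apply/mapP => -[u _ [/eqP]]; lia.
Qed.

Lemma size_dyck_walksS k h :
  size (dyck_walks k.+1 h.+1) =
  size (dyck_walks k h.+2) + (if h is h'.+1 then size (dyck_walks k h'.+1) else 0).
Proof. by rewrite /= size_cat size_map; case: h => [|h] //=; rewrite size_map. Qed.

Lemma size_dyck_walks k h d :
  k + h = d.*2 -> size (dyck_walks k h.+1) + 'C(k, d.+1) = 'C(k, d).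
Proof.
elim: k h d => [|k IH] h d kh.
  case: d kh => [|d] kh; first by have -> : h = 0 by lia.
  by case: h kh => [|h] kh; rewrite bin0n addn0 //; lia.
case: d kh => [|d] kh; first by [].
have IH_up : k + h.+1 = d.+1.*2 by rewrite addnS.
move: (IH h.+1 d.+1 IH_up); rewrite size_dyck_walksS !binS.
case: h kh {IH_up} => [|h] kh IH_up.
  have sym : 'C(k, d.+1) = 'C(k, d).
    have d_le : d <= k by lia.
    by rewrite -(bin_sub d_le); congr 'C(_, _); lia.
  lia.
have IH_down : k + h = d.*2 by lia.
by move: (IH h d IH_down); lia.
Qed.

Lemma size_dyck_walks_catalan m : size (dyck_walks m.*2 1) = catalan m.
Proof.
have ballot := size_dyck_walks (addn0 m.*2).
have bin_shift : m.+1 * 'C(m.*2, m.+1) = m * 'C(m.*2, m).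
  by rewrite mul_bin_left; congr (_ * _); lia.
rewrite /catalan (_ : 'C(m.*2, m) = m.+1 * size (dyck_walks m.*2 1)) ?mulKn //.
nia.
Qed.

Lemma dyck_walkE h s :
  dyck_walk h s =
  all (fun i => (0 < nth 0 s i) && updown (nth 0 (h :: s) i) (nth 0 s i)) (iota 0 (size s))
  && (last h s == 1).
Proof.
elim: s h => [|x s IH] h //=.
by rewrite IH -(addn0 1) iotaDl all_map -!andbA.
Qed.

Lemma card_set_ord N (P : pred nat) : #|[set w : 'I_N | P w]| = count P (iota 0 N).
Proof.
rewrite cardsE cardE -val_enum_ord count_map /enum_mem size_filter count_filter.
by apply: eq_count => x; rewrite /= andbT.
Qed.

Lemma nth_Fdiag n (p : {ffun node n -> node n}) i :
  i < n.*2 - 2 -> nth 0 (Fdiag p) i = Fentry p i i.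
Proof. by move=> lt_i; rewrite (nth_map 0) ?size_iota // nth_iota. Qed.

Section ParentMap.

Variables (n : nat) (p : {ffun node n -> node n}).
Hypothesis parent_lt : forall w : node n, 0 < w -> p w < w.

Lemma Fentry00 (r : node n) : val r = 0 -> Fentry p 0 0 = nchildren p r.
Proof.
move=> r0; apply: eq_card => w; rewrite !inE -val_eqE /= r0.
by have := @parent_lt w; lia.
Qed.

Lemma Fentry_diagS (v : node n) :
  0 < v -> Fentry p v v + 1 = Fentry p v.-1 v.-1 + nchildren p v.
Proof.
move=> v_gt0; rewrite /Fentry /nchildren.
set A := [set w | _]; set B := [set w | _]; set C := [set w | _].
have BC : B :|: C = v |: A.
  by apply/setP => w; rewrite !inE -!val_eqE /=; have := @parent_lt w; lia.
have B0C : B :&: C = set0.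
  by apply/setP => w; rewrite !inE -!val_eqE /=; have := @parent_lt w; lia.
have vNA : v \notin A by rewrite !inE; lia.
by rewrite -cardsUI B0C cards0 addn0 BC cardsU1 vNA addnC.
Qed.

(* The leading 1 stands for the virtual edge above the root. *)
Lemma Fdiag_step (v : node n) :
  v < n.*2 - 2 -> nth 0 (Fdiag p) v + 1 = nth 0 (1 :: Fdiag p) v + nchildren p v.
Proof.
move=> lt_v; rewrite nth_Fdiag //.
case: (posnP v) => [v0 | v_gt0]; first by rewrite v0 (Fentry00 v0) addnC.
by rewrite -(prednK v_gt0) /= nth_Fdiag ?prednK ?Fentry_diagS //; lia.
Qed.

Lemma Fentry_diag_gt0 i : i.+1 < n.*2.-1 -> 0 < Fentry p i i.
Proof.
move=> lt_i; apply/card_gt0P; exists (Ordinal lt_i); rewrite inE /=.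
by have := @parent_lt (Ordinal lt_i) isT; rewrite /= ltnS => -> /=.
Qed.

Lemma Fentry_diag_last i : i.+2 = n.*2.-1 -> Fentry p i i = 1.
Proof.
move=> last_i; have lt_i : i.+1 < n.*2.-1 by lia.
rewrite -(cards1 (Ordinal lt_i)); apply: eq_card => w; rewrite !inE -val_eqE /=.
by have := @parent_lt w; have := ltn_ord w; lia.
Qed.

Lemma sum_nchildren : \sum_(v : node n) nchildren p v = n.*2.-2.
Proof.
transitivity (\sum_(v : node n) \sum_(w : node n | (0 < w) && (p w == v)) 1).
  by apply: eq_bigr => v _; rewrite sum1dep_card.
rewrite -(partition_big (fun w => p w) predT) // sum1dep_card card_set_ord.
case: (n.*2.-1) => [|N] //=.
rewrite -{2}(size_iota 1 N) -count_predT.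
by apply: eq_in_count => x; rewrite mem_iota => /andP[].
Qed.

Lemma card_leaves :
  0 < n -> (forall v, (nchildren p v == 0) || (nchildren p v == 2)) ->
  #|[set v | nchildren p v == 0]| = n.
Proof.
move=> n_gt0 binary; have := sum_nchildren.
rewrite (bigID (fun v => nchildren p v == 0)) /= big1; last by move=> v /eqP.
rewrite (eq_bigr (fun _ => 2)); last by move=> v; case/orP: (binary v) => /eqP ->.
rewrite sum_nat_cond_const add0n.
have := cardsC [set v : node n | nchildren p v == 0]; rewrite card_ord.
rewrite (_ : ~: _ = [set v | nchildren p v != 0]); last by apply/setP => v; rewrite !inE.
move: #|[set v | _ == 0]| #|[set v | _ != 0]| => leaves internal; lia.
Qed.

End ParentMap.

Section RankedTree.

Variables (n : nat) (p : {ffun node n -> node n}).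
Hypothesis tree_p : ranked_tree p.

Lemma ranked_tree_parent_lt : forall w : node n, 0 < w -> p w < w.
Proof. by case/and3P: tree_p => /forallP lt_p _ _ w; apply/implyP. Qed.

Lemma ranked_tree_binary (v : node n) : (nchildren p v == 0) || (nchildren p v == 2).
Proof. by case/and3P: tree_p => _ /forallP. Qed.

Lemma Fdiag_dyck_walk : 1 < n -> dyck_walk 1 (Fdiag p).
Proof.
move=> n_gt1; have lt_p := ranked_tree_parent_lt.
have size_F : size (Fdiag p) = n.*2 - 2 by rewrite size_map size_iota.
rewrite dyck_walkE size_F; apply/andP; split.
  apply/allP => i; rewrite mem_iota add0n => /andP[_ lt_i].
  have lt_iN : i < n.*2.-1 by lia.
  have := Fdiag_step lt_p (v := Ordinal lt_iN) lt_i.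
  rewrite [nth 0 _ i]nth_Fdiag // (Fentry_diag_gt0 lt_p) /=; last lia.
  by case/orP: (ranked_tree_binary (Ordinal lt_iN)) => /eqP ->; rewrite /updown; lia.
rewrite -nth_last size_F (set_nth_default 0) ?size_F; last lia.
by rewrite nth_Fdiag ?(Fentry_diag_last lt_p); lia.
Qed.

End RankedTree.

Section LineageStack.

Variable e : nat -> nat.

Definition rises k : bool := e k.+1 == (e k).+1.

(* [lineages k] lists the parents of the edges still open before node [k] is
   placed, the root hanging from a virtual edge with parent [0]: node [k] takes
   the topmost edge and, when [e] rises at [k], opens two edges of its own. *)
Fixpoint lineages k : seq nat :=
  if k is k'.+1 then
    if rises k' then [:: k', k' & behead (lineages k')] else behead (lineages k')
  else [:: 0].

Definition stack_parent k : nat := head 0 (lineages k).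

Variable N : nat.
Hypotheses (e0 : e 0 = 1) (eN : e N = 0).
Hypothesis e_pos : forall k, k < N -> 0 < e k.
Hypothesis e_step : forall k, k < N -> updown (e k) (e k.+1).

Lemma size_lineages k : k <= N -> size (lineages k) = e k.
Proof.
elim: k => [|k IH] lt_k /=; first by rewrite e0.
have := e_step lt_k; have := e_pos lt_k; rewrite /updown /rises -IH; last exact: ltnW.
by case: (lineages k) => [|t r] //= _; case: ifP => [/eqP -> //|_ /= /eqP [<-]].
Qed.

Lemma lineages_lt k : 0 < k -> all (gtn k) (lineages k).
Proof.
elim: k => [|k IH] // _ /=.
have all_behead : all (gtn k.+1) (behead (lineages k)).
  case: k IH => [|k] IH; first by [].
  by case: (lineages k.+1) (IH isT) => //= t r /andP[_]; apply: sub_all => x /ltnW.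
by case: ifP => _ //=; rewrite ltnSn all_behead.
Qed.

Lemma stack_parent_lt k : 0 < k -> k < N -> stack_parent k < k.
Proof.
move=> k_gt0 lt_k; have := e_pos lt_k; rewrite -size_lineages; last exact: ltnW.
by have := lineages_lt k_gt0; rewrite /stack_parent; case: (lineages k) => //= t r /andP[].
Qed.

Lemma count_lineages k j : k <= N ->
  count_mem j (lineages k) + count (fun w => stack_parent w == j) (iota 0 k) =
  2 * ((j < k) && rises j) + (j == 0).
Proof.
elim: k => [|k IH] lt_k; first by case: j.
have : 0 < size (lineages k) by rewrite size_lineages ?e_pos // ltnW.
move: (IH (ltnW lt_k)); rewrite -[in iota 0 k.+1]addn1 iotaD count_cat /= addn0.
rewrite /stack_parent; case: (lineages k) => [|t r] //= IHk _.
have -> : count_mem j (if rises k then [:: k, k & r] else r) =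
          2 * (rises k && (k == j)) + count_mem j r by case: (rises k) => /=; lia.
rewrite ltnS leq_eqVlt orbC andb_orl.
by case: (ltngtP j k) IHk => [_|_|->] /=; rewrite ?ltnn ?andbF ?andbT ?orbF; lia.
Qed.

Lemma count_stack_parent j :
  count (fun w => stack_parent w == j) (iota 0 N) = 2 * ((j < N) && rises j) + (j == 0).
Proof.
have := count_lineages j (leqnn N).
by have := size_lineages (leqnn N); rewrite eN => /size0nil ->.
Qed.

End LineageStack.

Section StackTree.

Variables (n : nat) (s : seq nat).
Hypotheses (n_gt1 : 1 < n) (size_s : size s = n.*2 - 2) (walk_s : dyck_walk 1 s).

Let e := nth 0 (1 :: s).
Let N := n.*2.-1.

Let e0 : e 0 = 1 := erefl.

Let eN : e N = 0.
Proof. by rewrite /e nth_default //= size_s /N; lia. Qed.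

Let walk_e k : k < N.-1 -> (0 < e k.+1) && updown (e k) (e k.+1).
Proof.
move: walk_s; rewrite dyck_walkE size_s => /andP[/allP walk _] lt_k.
by apply: walk; rewrite mem_iota; lia.
Qed.

Let e_pos k : k < N -> 0 < e k.
Proof.
case: k => [|k] // lt_k; have lt_k' : k < N.-1 by lia.
by case/andP: (walk_e lt_k').
Qed.

Let e_step k : k < N -> updown (e k) (e k.+1).
Proof.
move=> lt_k; case: (ltnP k N.-1) => [/walk_e/andP[] // | ge_k].
have last_k : k = size s by rewrite size_s; lia.
have -> : e k = 1.
  by rewrite /e last_k -last_nth; move: walk_s; rewrite dyck_walkE => /andP[_ /eqP].
by rewrite (_ : k.+1 = N) ?eN //; lia.
Qed.

Definition stack_tree : {ffun node n -> node n} :=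
  [ffun w : node n => insubd w (stack_parent e w)].

Lemma val_stack_tree (w : node n) : val (stack_tree w) = stack_parent e w.
Proof.
have lt_N : stack_parent e w < N.
  case: (posnP w) => [-> | w_gt0]; first by rewrite /stack_parent /N /=; lia.
  exact: ltn_trans (stack_parent_lt e0 e_pos e_step w_gt0 (ltn_ord w)) (ltn_ord w).
by rewrite ffunE val_insubd lt_N.
Qed.

Lemma stack_tree_parent_lt : forall w : node n, 0 < w -> stack_tree w < w.
Proof. by move=> w w_gt0; rewrite val_stack_tree (stack_parent_lt e0 e_pos e_step). Qed.

Lemma nchildren_stack_tree (v : node n) : nchildren stack_tree v = 2 * rises e v.
Proof.
transitivity #|[set w : node n | (0 < w) && (stack_parent e w == v)]|.
  by apply: eq_card => w; rewrite !inE -val_eqE val_stack_tree.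
rewrite (card_set_ord _ (fun w : nat => (0 < w) && (stack_parent e w == v))).
have := count_stack_parent e0 eN e_pos e_step v.
have iota_N : iota 0 N = 0 :: iota 1 N.-1 by rewrite -[in LHS](@prednK N) //; lia.
rewrite ltn_ord iota_N /= add0n [_ + (_ == 0)]addnC eq_sym => /addnI <-.
by apply: eq_in_count => w; rewrite mem_iota => /andP[->].
Qed.

Lemma ranked_stack_tree : ranked_tree stack_tree.
Proof.
have binary v : (nchildren stack_tree v == 0) || (nchildren stack_tree v == 2).
  by rewrite nchildren_stack_tree; case: (rises e v).
apply/and3P; split; first by apply/forallP => w; apply/implyP/stack_tree_parent_lt.
  exact/forallP.
by rewrite card_leaves //; lia.
Qed.

Lemma Fdiag_stack_tree : Fdiag stack_tree = s.
Proof.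
have size_F : size (Fdiag stack_tree) = size s by rewrite size_map size_iota size_s.
have nth_F i : i <= size s -> nth 0 (1 :: Fdiag stack_tree) i = e i.
  elim: i => [|i IH] // lt_i; have lt_iN : i < N by lia.
  have lt_is : i < n.*2 - 2 by rewrite -size_s.
  have := Fdiag_step stack_tree_parent_lt (v := Ordinal lt_iN) lt_is.
  rewrite nchildren_stack_tree /= IH ?(ltnW lt_i) //.
  by have := e_step lt_iN; rewrite /updown /rises; case: eqP => /= [-> | _ /eqP]; lia.
apply: (eq_from_nth (x0 := 0)) => // i lt_i.
by rewrite -[nth 0 _ i]/(nth 0 (1 :: _) i.+1) nth_F // -size_F.
Qed.

End StackTree.

Lemma mem_diagonals n : 1 < n -> diagonals n =i dyck_walks (n.*2 - 2) 1.
Proof.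
move=> n_gt1 s; rewrite mem_dyck_walks mem_undup.
apply/mapP/andP => [[p] | [/eqP size_s walk_s]].
  rewrite mem_filter => /andP[tree_p _] ->.
  by rewrite size_map size_iota eqxx Fdiag_dyck_walk.
exists (stack_tree n s); last by rewrite Fdiag_stack_tree.
by rewrite mem_filter ranked_stack_tree ?mem_enum.
Qed.

Theorem proposition3 (n : nat) : 2 <= n -> size (diagonals n) = catalan n.-1.
Proof.
move=> n_gt1; have diagonalsE := mem_diagonals n_gt1.
rewrite (perm_size (uniq_perm (undup_uniq _) (uniq_dyck_walks _ _) diagonalsE)).
by rewrite -size_dyck_walks_catalan; congr (size (dyck_walks _ _)); lia.
Qed.
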